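(* For every integer $m\ge0$, the measure $\mathbb{P}^{(m)}_{\sigma}$ gives full measure to the set of paths $x=(x_p)_{p\in\mathcal P}\in\prod_{p\in\mathcal P}D(\mathbb{Q}_p)$ such that $x(t)\in\mathbb{A}_{\mathbb{Q}}$ for all $t\ge0$; that is, the adelic random walk $\mathbf S^{(m)}$ is almost surely $\mathbb{A}_{\mathbb{Q}}$-valued for all time.
   Context: Fix a real exponent $b>0$ and a sequence $\sigma=(\sigma_p)_{p\in\mathcal P}$ of nonnegative reals indexed by the set $\mathcal P$ of primes with $\sum_p\sigma_p<\infty$. For a prime $p$, $\mathbb{Q}_p$ denotes the $p$-adic numbers with absolute value $|\cdot|_p$ and $\mathbb{Z}_p$ its closed unit ball. Let $G_p\subset\mathbb{Q}_p$ be the set of $p$-adic numbers of the form $\sum_{k<0}a_kp^k$ with $a_k\in\{0,\dots,p-1\}$, only finitely many nonzero; $G_p$ is a set of representatives of $\mathbb{Q}_p/\mathbb{Z}_p$ and is given the group structure of $\mathbb{Q}_p/\mathbb{Z}_p$. Let $X^{(p)}$ be a $G_p$-valued random variable with $\Pr(|X^{(p)}|_p=p^k)=(p^b-1)p^{-kb}$ for every integer $k\ge1$, and, conditionally on $|X^{(p)}|_p=p^k$, uniformly distributed on the finite set $\{x\in G_p:|x|_p=p^k\}$. Let $X^{(p)}_1,X^{(p)}_2,\dots$ be i.i.d. copies of $X^{(p)}$ and $S^{(p)}_n=X^{(p)}_1+\dots+X^{(p)}_n$ (sum in the group $G_p$), $S^{(p)}_0=0$. Put $D_p=\frac{p^b(p-1)}{p^{b+1}-1}\sigma_p$.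 For an integer $m\ge0$, let $\mathbb{P}^{(m)}_p$ be the law on the Skorokhod space $D(\mathbb{Q}_p)$ of càdlàg paths $[0,\infty)\to\mathbb{Q}_p$ of the process $t\mapsto p^mS^{(p)}_{\lfloor D_pp^{mb}t\rfloor}$. Let $\mathbb{P}^{(m)}_\sigma=\prod_{p\in\mathcal P}\mathbb{P}^{(m)}_p$ be the product measure on $\prod_{p\in\mathcal P}D(\mathbb{Q}_p)$ (independent components, each random walk independent across primes), and call the coordinate process $\mathbf S^{(m)}(t)=(p^mS^{(p)}_{\lfloor D_pp^{mb}t\rfloor})_{p\in\mathcal P}$ the adelic random walk. The (finite rational) adeles are $\mathbb{A}_{\mathbb{Q}}=\{x=(x_p)\in\prod_p\mathbb{Q}_p: x_p\in\mathbb{Z}_p\text{ for all but finitely many }p\}$. *)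

From HB Require Import structures.
From mathcomp Require Import all_boot all_order all_algebra.
From mathcomp Require Import all_classical all_reals all_analysis.
Set Implicit Arguments. Unset Strict Implicit. Unset Printing Implicit Defensive.
Import Order.TTheory GRing.Theory Num.Theory.
Local Open Scope ring_scope.
Local Open Scope classical_set_scope.

(* p-adic absolute value |x|_p of a rational number x (Q is embedded in Q_p) *)
Definition padic_abs (p : nat) (x : rat) : rat :=
  if x == 0 then 0
  else (p%:Q ^+ logn p `|denq x|%N) / (p%:Q ^+ logn p `|numq x|%N).

Definition in_Zp (p : nat) (x : rat) : Prop := padic_abs p x <= 1.

(* G_p = { sum_{k<0} a_k p^k, a_k in {0..p-1}, finitely many nonzero }
       = rationals in [0,1) whose denominator is a power of p *)
Definition in_Gp (p : nat) (x : rat) : Prop :=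
  0 <= x /\ x < 1 /\ exists k : nat, denq x = (p ^ k)%:Z.

(* group law of G_p (that of Q_p/Z_p = Z[1/p]/Z): addition modulo 1 *)
Definition Gp_add (x y : rat) : rat := (x + y) - (Num.floor (x + y))%:~R.

(* partial sums S_n = X_0 + ... + X_{n-1} in G_p (X_0, X_1, ... play the
   role of X_1, X_2, ... in the paper) *)
Fixpoint Gp_walk {Omega : Type} (X : nat -> Omega -> rat) (n : nat) (w : Omega)
  : rat :=
  match n with
  | 0 => 0
  | n'.+1 => Gp_add (Gp_walk X n' w) (X n' w)
  end.

Definition Dp {R : realType} (b : R) (sigma : nat -> R) (p : nat) : R :=
  (p%:R `^ b * (p%:R - 1)) / (p%:R `^ (b + 1) - 1) * sigma p.

Definition mutually_independent {d : measure_display} {Omega : measurableType d}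
  {R : realType} {I : eqType} (P : probability Omega R) (X : I -> Omega -> rat)
  : Prop :=
  forall (s : seq I), uniq s -> forall A : I -> set rat,
    P (\bigcap_(i in [set` s]) (X i @^-1` A i)) =
    (\prod_(i <- s) P (X i @^-1` A i))%E.

From HB Require Import structures.
From mathcomp Require Import all_boot all_order all_algebra.
From mathcomp Require Import all_classical all_reals all_analysis.
From mathcomp Require Import ring lra.
Set Implicit Arguments. Unset Strict Implicit. Unset Printing Implicit Defensive.
Import Order.TTheory GRing.Theory Num.Theory.
Local Open Scope ring_scope.
Local Open Scope classical_set_scope.

(* Borel-Cantelli, prime by prime.  Fix an integer horizon T.  The walk
   p^m S^(p) leaves Z_p before time T only if one of its first
   N_p(T) <= D_p p^(mb) T steps satisfies |X|_p > p^m, an event of probability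
   p^(-mb); hence this happens with probability at most T D_p <= T sigma_p,
   which is summable over p.  So almost surely, for every T, only finitely
   many primes misbehave before time T. *)

Definition scaled_integral (m p : nat) (x : rat) : Prop :=
  exists z : int, p%:Q ^+ m * x = z%:~R.

Lemma scaled_integral0 m p : scaled_integral m p 0.
Proof. by exists 0; rewrite mulr0. Qed.

Lemma scaled_integral_Gp_add m p x y :
  scaled_integral m p x -> scaled_integral m p y ->
  scaled_integral m p (Gp_add x y).
Proof.
move=> [zx hx] [zy hy]; exists (zx + zy - p%:Z ^+ m * Num.floor (x + y)).
by rewrite /Gp_add mulrBr mulrDr hx hy !rmorphB !rmorphD /= rmorphM /= rmorphXn.
Qed.

Lemma scaled_integral_Gp_walk {Omega : Type} m p (X : nat -> Omega -> rat) N w :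
  (forall n, (n < N)%N -> scaled_integral m p (X n w)) ->
  scaled_integral m p (Gp_walk X N w).
Proof.
elim: N => [|N IH] hX /=; first exact: scaled_integral0.
apply: scaled_integral_Gp_add; last exact: hX.
by apply: IH => n ltnN; apply: hX; rewrite ltnS ltnW.
Qed.

Lemma in_Zp_scaled_integral m p x :
  prime p -> scaled_integral m p x -> in_Zp p (p%:Q ^+ m * x).
Proof.
move=> p_pr [z ->]; rewrite /in_Zp /padic_abs; case: eqP => // _.
rewrite numq_int denq_int /= logn1 expr0 div1r invf_le1.
  by rewrite exprn_ege1 // ler1n prime_gt0.
by rewrite exprn_gt0 // ltr0n prime_gt0.
Qed.

Lemma denq_Gp_le m p x k : prime p -> in_Gp p x ->
  padic_abs p x = p%:Q ^+ k.+1 -> (k < m)%N ->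
  exists2 j, (j <= m)%N & denq x = (p ^ j)%:Z.
Proof.
move=> p_pr [_ [_ [j den_x]]] abs_x ltkm; exists j => //.
case: j den_x => // j den_x.
have x_neq0 : x != 0.
  apply: contraTneq (prime_gt1 p_pr) => x0; move: den_x; rewrite x0 (denq_int 0).
  case=> one_eq; apply/negP => p_gt1.
  by have := ltn_exp2l 0 j.+1 p_gt1; rewrite expn0 -one_eq.
move: abs_x; rewrite /padic_abs (negbTE x_neq0) den_x pfactorK //.
rewrite logn_coprime; last first.
  by have := coprime_num_den x; rewrite den_x /= coprime_sym coprime_pexpl.
rewrite expr0 divr1 -!natrX => /eqP; rewrite eqr_nat eqn_exp2l ?prime_gt1 //.
by move/eqP => ->.
Qed.

Lemma scaled_integral_of_padic_abs m p x k : prime p -> in_Gp p x ->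
  padic_abs p x = p%:Q ^+ k.+1 -> (k < m)%N -> scaled_integral m p x.
Proof.
move=> p_pr Gp_x abs_x ltkm.
have [j lejm den_x] := denq_Gp_le p_pr Gp_x abs_x ltkm.
exists (numq x * (p ^ (m - j))%:Z).
have natXE i : ((p ^ i)%N%:Z)%:~R = p%:Q ^+ i by rewrite -natrX.
have pj_neq0 : p%:Q ^+ j != 0 by rewrite expf_neq0 // pnatr_eq0 -lt0n prime_gt0.
rewrite -{1}(divq_num_den x) den_x intrM !natXE -{1}(subnK lejm) exprD.
by field.
Qed.

Lemma sum_geometric_law (F : fieldType) (q : F) (m : nat) : q != 0 ->
  \sum_(k < m) (q - 1) * (q ^+ k.+1)^-1 = 1 - (q ^+ m)^-1.
Proof.
move=> q_neq0; elim: m => [|m IH]; first by rewrite big_ord0 expr0 invr1 subrr.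
have qm_neq0 : q ^+ m != 0 by rewrite expf_neq0.
by rewrite big_ord_recr /= IH exprS; field; rewrite qm_neq0 q_neq0.
Qed.

Lemma measurable_preimage_rat d (Omega : measurableType d) (f : Omega -> rat) :
  (forall v, measurable [set w | f w = v]) ->
  forall A : set rat, measurable (f @^-1` A).
Proof.
move=> mf A.
have -> : f @^-1` A = \bigcup_(v in A) [set w | f w = v].
  apply/seteqP; split => [w Afw | w [v Av /= fwv]]; first by exists (f w).
  by rewrite /preimage /= fwv.
rewrite bigcup_mkcond; apply: bigcupT_measurable_rat => v.
by case: ifP.
Qed.

Lemma powR_mulrn_exp (R : realType) (x b : R) (k : nat) : 0 <= x ->
  x `^ (k%:R * b) = (x `^ b) ^+ k.
Proof. by move=> x_ge0; rewrite mulrC powRrM powR_mulrn // powR_ge0. Qed.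

Section DpBounds.
Variables (R : realType) (b : R) (sigma : nat -> R) (p : nat).
Hypotheses (b_ge0 : 0 <= b) (p_gt1 : (1 < p)%N) (sigma_ge0 : 0 <= sigma p).

Let pR_ge2 : (2 : R) <= p%:R. Proof. by rewrite ler_nat. Qed.

Let pRb_ge1 : 1 <= p%:R `^ b.
Proof. by rewrite -[leLHS](powRr0 p%:R); apply: ler_powR; rewrite // ler1n ltnW. Qed.

Let pR_powRS : p%:R `^ (b + 1) = p%:R `^ b * p%:R.
Proof.
rewrite powRD ?powRr1 ?ler0n //.
by apply/implyP => _; rewrite pnatr_eq0 -lt0n ltnW.
Qed.

Let Dp_denom_gt0 : 0 < p%:R `^ (b + 1) - 1.
Proof. by rewrite pR_powRS; move: pRb_ge1 pR_ge2; nra. Qed.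

Lemma Dp_ge0 : 0 <= Dp b sigma p.
Proof.
apply/mulr_ge0/sigma_ge0/divr_ge0/ltW/Dp_denom_gt0.
by apply: mulr_ge0; [exact: powR_ge0 | move: pR_ge2; lra].
Qed.

Lemma Dp_le_sigma : Dp b sigma p <= sigma p.
Proof.
rewrite /Dp -[leRHS]mul1r ler_wpM2r // ler_pdivrMr // mul1r pR_powRS.
by move: pRb_ge1; nra.
Qed.

End DpBounds.

Section AdelicWalk.
Variables (R : realType) (b : R) (sigma : nat -> R).
Variables (d : measure_display) (Omega : measurableType d).
Variables (P : probability Omega R) (X : nat -> nat -> Omega -> rat) (m : nat).
Hypotheses (b_gt0 : 0 < b) (sigma_ge0 : forall p, prime p -> 0 <= sigma p).
Hypothesis sigma_summable :
  (\esum_(p in [set p | prime p]) (sigma p)%:E < +oo)%E.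
Hypothesis X_measurable :
  forall p n v, prime p -> measurable [set w | X p n w = v].
Hypothesis X_Gp : forall p n w, prime p -> in_Gp p (X p n w).
Hypothesis X_law : forall p n k, prime p -> (0 < k)%N ->
  P [set w | padic_abs p (X p n w) = p%:Q ^+ k] =
  ((p%:R `^ b - 1) * p%:R `^ (- (k%:R * b)))%:E.

Definition walk_length (p : nat) (t : R) : nat :=
  Num.truncn (Dp b sigma p * p%:R `^ (m%:R * b) * t).

Definition step_abs_eq (p n k : nat) : set Omega :=
  [set w | padic_abs p (X p n w) = p%:Q ^+ k.+1].

(* Contains every step with |X|_p > p^m, plus the null event X = 0. *)
Definition large_step (p n : nat) : set Omega :=
  ~` \big[setU/set0]_(k < m) step_abs_eq p n k.

Definition bad_prime (T p : nat) : set Omega :=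
  if prime p then \big[setU/set0]_(n < walk_length p T%:R) large_step p n
  else set0.

Lemma step_abs_eq_measurable p n k : prime p -> measurable (step_abs_eq p n k).
Proof.
move=> p_pr; apply: (@measurable_preimage_rat _ _ (X p n) _
  [set v | padic_abs p v = p%:Q ^+ k.+1]) => v.
exact: X_measurable.
Qed.

Lemma large_step_measurable p n : prime p -> measurable (large_step p n).
Proof.
move=> p_pr; apply/measurableC/bigsetU_measurable => k _.
exact: step_abs_eq_measurable.
Qed.

Lemma bad_prime_measurable T p : measurable (bad_prime T p).
Proof.
rewrite /bad_prime; case: ifP => // p_pr.
by apply: bigsetU_measurable => n _; exact: large_step_measurable.
Qed.

Lemma large_step_prob p n : prime p ->
  P (large_step p n) = (((p%:R `^ b) ^+ m)^-1)%:E.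
Proof.
move=> p_pr; have m_step k := step_abs_eq_measurable n k p_pr.
have mU : measurable (\big[setU/set0]_(k < m) step_abs_eq p n k).
  by apply: bigsetU_measurable => k _.
have disj : trivIset setT (step_abs_eq p n).
  move=> i j _ _ [w [/= abs_i]]; rewrite /step_abs_eq /= abs_i -!natrX => /eqP.
  by rewrite eqr_nat eqn_exp2l ?prime_gt1 // => /eqP [].
have pRb_neq0 : p%:R `^ b != 0 :> R.
  by rewrite powR_eq0 negb_and pnatr_eq0 -lt0n prime_gt0.
rewrite /large_step probability_setC // measure_semi_additive //.
rewrite (eq_bigr (fun k : 'I_m => ((p%:R `^ b - 1) * ((p%:R `^ b) ^+ k.+1)^-1)%:E));
  last by move=> k _; rewrite /= (X_law n p_pr (ltn0Sn k)) powRN powR_mulrn_exp.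
by rewrite sumEFin sum_geometric_law // -EFinB opprB addrCA subrr addr0.
Qed.

Lemma bad_prime_prob_le T p : prime p -> (P (bad_prime T p) <= (T%:R * sigma p)%:E)%E.
Proof.
move=> p_pr; rewrite /bad_prime p_pr.
apply: (@le_trans _ _ (\sum_(n < walk_length p T%:R) P (large_step p n))%E).
  by apply: le_mu_bigsetU => n _; exact: large_step_measurable.
under eq_bigr => n _ do rewrite large_step_prob //.
have qm_gt0 : 0 < (p%:R `^ b) ^+ m :> R.
  by rewrite exprn_gt0 // powR_gt0 // ltr0n prime_gt0.
have D_ge0 := Dp_ge0 (sigma := sigma) (ltW b_gt0) (prime_gt1 p_pr) (sigma_ge0 p_pr).
have len_le : (walk_length p T%:R)%:R <= Dp b sigma p * (p%:R `^ b) ^+ m * T%:R.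
  rewrite /walk_length powR_mulrn_exp ?ler0n // truncn_le.
  by apply/mulr_ge0/ler0n/mulr_ge0/ltW.
rewrite sumEFin sumr_const card_ord lee_fin -(mulr_natl ((p%:R `^ b) ^- m)).
apply: (le_trans (ler_wpM2r _ len_le)); first by rewrite invr_ge0 ltW.
rewrite mulrAC mulfK ?gt_eqF // mulrC ler_wpM2l //.
exact: (Dp_le_sigma (sigma := sigma) (ltW b_gt0) (prime_gt1 p_pr) (sigma_ge0 p_pr)).
Qed.

Lemma bad_prime_summable T : (\sum_(p <oo) P (bad_prime T p) < +oo)%E.
Proof.
pose bound p := if prime p then (T%:R%:E * (sigma p)%:E)%E else 0%E.
apply: (le_lt_trans (lee_nneseries (v := bound) _ _)) => [p _ _|p _|].
- exact: measure_ge0.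
- rewrite /bound; case: ifP => p_pr; last by rewrite /bad_prime p_pr measure0.
  by rewrite -EFinM; exact: bad_prime_prob_le.
have sigmaE_ge0 p : prime p -> (0 <= (sigma p)%:E)%E by move=> ?; rewrite lee_fin sigma_ge0.
rewrite -eseries_mkcond nneseriesZl // nneseries_esum //.
by apply: lte_mul_pinfty; rewrite ?lee_fin.
Qed.

Lemma scaled_walk_in_Zp T p w t : prime p -> ~ bad_prime T p w ->
  0 <= t -> t <= T%:R ->
  in_Zp p (p%:Q ^+ m * Gp_walk (X p) (walk_length p t) w).
Proof.
move=> p_pr not_bad t_ge0 le_tT.
apply/in_Zp_scaled_integral/scaled_integral_Gp_walk => // n lt_n.
have : ~ large_step p n w.
  move: not_bad; rewrite /bad_prime p_pr -bigcup_mkord => + large_n; apply.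
  exists n => //; apply: leq_trans lt_n (le_truncn _).
  rewrite ler_wpM2l // mulr_ge0 ?powR_ge0 //.
  exact: (Dp_ge0 (sigma := sigma) (ltW b_gt0) (prime_gt1 p_pr) (sigma_ge0 p_pr)).
rewrite /large_step /= -bigcup_mkord => /contrapT [k /= ltkm abs_k].
exact: scaled_integral_of_padic_abs (X_Gp n w p_pr) abs_k ltkm.
Qed.

Lemma adelic_walk_ae : {ae P, forall w, forall t : R, 0 <= t ->
  finite_set [set p | prime p /\
    ~ in_Zp p (p%:Q ^+ m * Gp_walk (X p) (walk_length p t) w)]}.
Proof.
have null_limsup : P.-negligible (\bigcup_T lim_sup_set (bad_prime T)).
  apply: negligible_bigcup => T; exists (lim_sup_set (bad_prime T)); split => //.
  - apply: bigcapT_measurable => n; apply: bigcup_measurable => j _.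
    exact: bad_prime_measurable.
  - exact: lim_sup_set_cvg0 (bad_prime_measurable T) (bad_prime_summable T).
apply: negligibleS null_limsup => w /= not_ae.
apply: contrapT => not_limsup; apply: not_ae => t t_ge0.
pose T := (Num.truncn t).+1.
have le_tT : t <= T%:R by apply/ltW/truncnS_gt.
have [K good_after_K] : exists K, forall p, (K <= p)%N -> ~ bad_prime T p w.
  apply: contrapT => bad_often; apply: not_limsup; exists T => // K _ /=.
  apply: contrapT => no_bad; apply: bad_often; exists K => p leKp bad_p.
  by apply: no_bad; exists p.
apply: sub_finite_set (finite_II K) => p [p_pr not_Zp] /=.
rewrite ltnNge; apply/negP => leKp.
exact/not_Zp/(scaled_walk_in_Zp p_pr (good_after_K p leKp)).
Qed.

End AdelicWalk.

Theorem theorem7 (R : realType) (b : R) (sigma : nat -> R)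
  (d : measure_display) (Omega : measurableType d) (P : probability Omega R)
  (X : nat -> nat -> Omega -> rat) :
  0 < b ->
  (forall p, prime p -> 0 <= sigma p) ->
  (\esum_(p in [set p | prime p]) (sigma p)%:E < +oo)%E ->
  (* X p n is measurable, G_p-valued *)
  (forall p n v, prime p -> measurable [set w | X p n w = v]) ->
  (forall p n w, prime p -> in_Gp p (X p n w)) ->
  (* law of |X|_p *)
  (forall p n k, prime p -> (0 < k)%N ->
     P [set w | padic_abs p (X p n w) = (p%:Q ^+ k)] =
     ((p%:R `^ b - 1) * p%:R `^ (- (k%:R * b)))%:E) ->
  (* conditionally on |X|_p = p^k, uniform on {x in G_p : |x|_p = p^k} *)
  (forall p n x y, prime p -> in_Gp p x -> in_Gp p y ->
     padic_abs p x = padic_abs p y ->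
     P [set w | X p n w = x] = P [set w | X p n w = y]) ->
  (* all the X^{(p)}_n, over all primes p and all n, are independent *)
  mutually_independent P (fun pn : nat * nat => X pn.1 pn.2) ->
  forall m : nat,
  {ae P, forall w : Omega, forall t : R, 0 <= t ->
     finite_set [set p | prime p /\
       ~ in_Zp p (p%:Q ^+ m *
           Gp_walk (X p) (Num.truncn (Dp b sigma p * p%:R `^ (m%:R * b) * t)) w)]}.
Proof.
move=> b_gt0 sigma_ge0 sigma_summable X_measurable X_Gp X_law _ _ m.
exact: adelic_walk_ae.
Qed.
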